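(* Let $N'\ge2$ and let $\mu_1<0<\mu_2<\cdots<\mu_{N'}$ be real numbers. Let $\delta$ be a sufficiently small positive constant ($0<\delta\ll1$, in particular $\delta<\mu_2$) and let $0<a<1<b<c$ be constants. Define $$\bar x_1=\frac{b-1}{2b[-\mu_1+\delta]},\qquad \bar x_k(m)=\frac{\frac{c+m-1}{m}-a}{2a[\mu_k-\delta]}\quad(2\le k\le N',\ m\ge1).$$ Call admissible any choice of a nonempty set $S\subseteq\{2,\dots,N'\}$ with $m=|S|$, together with positive reals $x_1$ and $(x_k)_{k\in S}$ satisfying $x_1\le\bar x_1$ and $x_k\ge\bar x_k(m)$ for all $k\in S$; for such a choice set $\pi_1=\frac{x_1}{x_1+\sum_{k\in S}x_k}$. Then the maximum of $\pi_1$ over all admissible choices is $$\pi_1^*=\frac{\frac{b-1}{2b[-\mu_1+\delta]}}{\frac{b-1}{2b[-\mu_1+\delta]}+\frac{c-a}{2a[\mu_{N'}-\delta]}},$$ attained with $S=\{N'\}$, $x_1=\bar x_1$, $x_{N'}=\bar x_{N'}(1)$.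
   Context: Setting: graphs $G_1,\dots,G_{N'}$ on a common node set with adjacency matrices $A_l$, constant cure probability $\beta$ and infection probability $\gamma$; configuration $\mathcal C_l=(G_l,\beta,\gamma)$, $\mu_l=\beta-\gamma\lambda_1(A_l)$ where $\lambda_1(A)$ is the eigenvalue of largest modulus. $\mathcal C_1$ violates the epidemic threshold ($\mu_1<0$); $\mathcal C_2,\dots,\mathcal C_{N'}$ are moving-target-defense-induced configurations satisfying it. The defender switches between $\mathcal C_1$ and the configurations $\mathcal C_k$, $k\in S$, by a continuous-time Markov chain with generator $Q$; $x_l=1/(-q_{ll})$ is the expected sojourn time in $\mathcal C_l$ and $\pi_l=x_l/\sum_p x_p$ the portion of time in $\mathcal C_l$. The bounds $x_1\le\bar x_1$, $x_k\ge\bar x_k(m)$ are exactly the sojourn-time conditions of a sufficient almost-sure convergence criterion (with one violating configuration and $m+1$ configurations in total), in which $\delta,a,b,c$ are constants such that there exist symmetric positive definite matrices $P_l$ with $aI<P_k<I$ for the satisfying configurations, $bI<P_1<cI$, and $\{P_l[\gamma A_l-\beta I]\}^s\le[\gamma\lambda_1(A_l)-\beta+\delta/2]P_l$. Thus $\pi_1^*$ is the maximal portion of time the system can stay in $\mathcal C_1$ under this criterion. *)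

From mathcomp Require Import all_boot all_order all_algebra.
Set Implicit Arguments. Unset Strict Implicit. Unset Printing Implicit Defensive.
Import Order.TTheory GRing.Theory Num.Theory.
Local Open Scope ring_scope.

(* Configurations are indexed by naturals 1..N'; indices are taken in 'I_(N'.+1)
   (index 0 is unused). mu k = mu_k, x k = expected sojourn time x_k. *)

Definition xbar1 {R : realFieldType} (mu1 delta b : R) : R :=
  (b - 1) / (2 * b * (- mu1 + delta)).

Definition xbark {R : realFieldType} (muk delta a c : R) (m : nat) : R :=
  ((c + m%:R - 1) / m%:R - a) / (2 * a * (muk - delta)).

Definition pi1 {R : realFieldType} {N : nat} (S : {set 'I_N.+1}) (x : 'I_N.+1 -> R)
  (i1 : 'I_N.+1) : R :=
  x i1 / (x i1 + \sum_(k in S) x k).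

Definition admissible {R : realFieldType} {N : nat} (mu : 'I_N.+1 -> R) (delta a b c : R)
  (i1 : 'I_N.+1) (S : {set 'I_N.+1}) (x : 'I_N.+1 -> R) : Prop :=
  [/\ S != set0,
      (forall k, k \in S -> (2 <= (k : nat))%N),
      0 < x i1 /\
      (forall k, k \in S -> 0 < x k),
      x i1 <= xbar1 (mu i1) delta b
    & (forall k, k \in S -> xbark (mu k) delta a c #|S| <= x k)].

From mathcomp Require Import all_boot all_order all_algebra.
From mathcomp Require Import ring lra.
Set Implicit Arguments. Unset Strict Implicit. Unset Printing Implicit Defensive.
Import Order.TTheory GRing.Theory Num.Theory.
Local Open Scope ring_scope.

(* pi_1 = x_1 / (x_1 + s) increases with x_1 and decreases with
   the sum s of the other sojourn times, so it suffices to bound s from below.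
   Each x_k is at least xbar_k(m) >= xbar_N'(m) since mu_k <= mu_N', and
   m * xbar_N'(m) = (c + m - 1 - m a) / (2 a (mu_N' - delta)) is smallest at
   m = 1, because c + m - 1 - m a = (c - a) + (m - 1)(1 - a). *)

Lemma mu_nondecreasing (R : realFieldType) (N : nat) (mu : 'I_N.+1 -> R) :
  (forall k : 'I_N.+1, (2 <= k < N)%N -> mu k < mu (inord k.+1)) ->
  forall k l : 'I_N.+1, (2 <= k)%N -> (k <= l)%N -> mu k <= mu l.
Proof.
move=> mu_incr k [l l_lt] k_ge2; elim: l l_lt => [|l IHl] l_lt kl.
  by move: (leq_trans k_ge2 kl).
move: kl; rewrite leq_eqVlt => /predU1P[k_eq|kl].
  by rewrite (_ : k = Ordinal l_lt) //; apply: val_inj.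
have l_lt' : (l < N.+1)%N := ltnW l_lt.
apply: le_trans (IHl l_lt' kl) _.
have -> : Ordinal l_lt = inord l.+1 by apply: val_inj; rewrite /= inordK.
by apply/ltW/mu_incr; rewrite /= (leq_trans k_ge2 kl).
Qed.

Lemma ratio_le (R : realFieldType) (x X s S : R) :
  0 < x -> x <= X -> 0 < S -> S <= s -> x / (x + s) <= X / (X + S).
Proof.
move=> x_gt0 xX S_gt0 Ss.
rewrite ler_pdivrMr; last by lra.
rewrite mulrAC ler_pdivlMr; last by lra.
nra.
Qed.

Lemma xbark1 (R : realFieldType) (mu delta a c : R) :
  xbark mu delta a c 1 = (c - a) / (2 * a * (mu - delta)).
Proof. by rewrite /xbark addrK divr1. Qed.

Section SojournBounds.

Variables (R : realFieldType) (delta a c : R).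
Hypotheses (a_gt0 : 0 < a) (a_lt1 : a < 1) (a_lt_c : a < c).

Lemma xbark_numerator_gt0 (m : nat) : (0 < m)%N -> 0 < (c + m%:R - 1) / m%:R - a.
Proof.
move=> m_gt0; rewrite subr_gt0 ltr_pdivlMr ?ltr0n // -subr_gt0.
have -> : c + m%:R - 1 - a * m%:R = (c - a) + (m%:R - 1) * (1 - a) by ring.
by rewrite ltr_wpDr ?subr_gt0 // mulr_ge0 ?subr_ge0 ?ler1n // ltW.
Qed.

Lemma xbark_antitone (mu mu' : R) (m : nat) : (0 < m)%N ->
  delta < mu -> mu <= mu' -> xbark mu' delta a c m <= xbark mu delta a c m.
Proof.
move=> m_gt0 delta_mu mu_mu'.
rewrite /xbark ler_pM2l ?xbark_numerator_gt0 //.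
rewrite lef_pV2 ?posrE ?mulr_gt0 ?subr_gt0 //; last exact: lt_le_trans mu_mu'.
rewrite ler_pM2l ?mulr_gt0 //; lra.
Qed.

Lemma xbark1_le_card_mul (mu : R) (m : nat) : (0 < m)%N -> delta < mu ->
  xbark mu delta a c 1 <= xbark mu delta a c m *+ m.
Proof.
move=> m_gt0 delta_mu; have m_ge1 : 1 <= (m%:R : R) by rewrite ler1n.
rewrite -mulr_natr xbark1 /xbark [X in _ <= X]mulrAC.
rewrite ler_pM2r ?invr_gt0 ?mulr_gt0 ?subr_gt0 // mulrBl divfK ?pnatr_eq0 -?lt0n //.
rewrite -subr_ge0.
have -> : c + m%:R - 1 - a * m%:R - (c - a) = (m%:R - 1) * (1 - a) by ring.
by rewrite mulr_ge0 ?subr_ge0 // ltW.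
Qed.

End SojournBounds.

Lemma admissible_sum_ge (R : realFieldType) (N : nat) (mu : 'I_N.+1 -> R)
    (delta a b c : R) (S : {set 'I_N.+1}) (x : 'I_N.+1 -> R) :
  (forall k : 'I_N.+1, (2 <= k < N)%N -> mu k < mu (inord k.+1)) ->
  delta < mu (inord 2) -> 0 < a -> a < 1 -> a < c ->
  admissible mu delta a b c (inord 1) S x ->
  xbark (mu ord_max) delta a c 1 <= \sum_(k in S) x k.
Proof.
move=> mu_incr delta_mu2 a_gt0 a_lt1 a_lt_c [S_neq0 S_ge2 _ _ x_ge].
have m_gt0 : (0 < #|S|)%N by rewrite card_gt0.
have mu_max k : k \in S -> delta < mu k /\ mu k <= mu ord_max.
  move=> kS; have k_ge2 := S_ge2 k kS; split; last first.
    by apply: mu_nondecreasing; rewrite // -ltnS.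
  have two_le_N : (2 < N.+1)%N by rewrite ltnS (leq_trans k_ge2) // -ltnS.
  by apply: lt_le_trans delta_mu2 (mu_nondecreasing mu_incr _ _); rewrite inordK.
have [k0 k0S] := set0Pn S S_neq0; have [delta_mu0 mu0_max] := mu_max k0 k0S.
have delta_max : delta < mu ord_max := lt_le_trans delta_mu0 mu0_max.
apply: le_trans (xbark1_le_card_mul c a_gt0 a_lt1 m_gt0 delta_max) _.
rewrite -sumr_const; apply: ler_sum => k kS; have [delta_mu mu_le] := mu_max k kS.
exact: le_trans (xbark_antitone a_gt0 a_lt1 a_lt_c m_gt0 delta_mu mu_le) (x_ge k kS).
Qed.

Theorem theorem5 (R : realFieldType) (N : nat) (hN : (2 <= N)%N)
  (mu : 'I_N.+1 -> R) (delta a b c : R)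
  (mu1neg : mu (inord 1) < 0)
  (mu2pos : 0 < mu (inord 2))
  (mu_incr : forall k : 'I_N.+1, (2 <= (k : nat) < N)%N -> mu k < mu (inord k.+1))
  (hdelta0 : 0 < delta) (hdelta : delta < mu (inord 2))
  (ha0 : 0 < a) (ha1 : a < 1) (hb1 : 1 < b) (hbc : b < c) :
  let pistar := xbar1 (mu (inord 1)) delta b /
      (xbar1 (mu (inord 1)) delta b + (c - a) / (2 * a * (mu ord_max - delta))) in
  (forall (S : {set 'I_N.+1}) (x : 'I_N.+1 -> R),
      admissible mu delta a b c (inord 1) S x -> pi1 S x (inord 1) <= pistar)
  /\
  (let xopt := fun k : 'I_N.+1 =>
       if k == inord 1 then xbar1 (mu (inord 1)) delta b
       else xbark (mu ord_max) delta a c 1 in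
   admissible mu delta a b c (inord 1) [set ord_max] xopt /\
   pi1 [set ord_max] xopt (inord 1) = pistar).
Proof.
have a_lt_c : a < c by lra.
have mu2_max : mu (inord 2) <= mu ord_max.
  by apply: mu_nondecreasing; rewrite ?inordK.
have xbar1_gt0 : 0 < xbar1 (mu (inord 1)) delta b.
  by rewrite /xbar1 divr_gt0 ?mulr_gt0; lra.
have xbarN_gt0 : 0 < xbark (mu ord_max) delta a c 1.
  by rewrite xbark1 divr_gt0 ?mulr_gt0; lra.
move=> pistar; split.
  move=> S x adm; have [_ _ [x1_gt0 _] x1_le _] := adm.
  rewrite /pi1 /pistar -xbark1; apply: ratio_le => //.
  exact: admissible_sum_ge adm.
move=> xopt.
have one_neq_max : inord 1 != ord_max :> 'I_N.+1.
  by rewrite -val_eqE /= inordK ?neq_ltn ?hN // ltnS ltnW.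
have xopt_max : xopt ord_max = xbark (mu ord_max) delta a c 1.
  by rewrite /xopt eq_sym (negbTE one_neq_max).
have xopt1 : xopt (inord 1) = xbar1 (mu (inord 1)) delta b by rewrite /xopt eqxx.
split; last by rewrite /pi1 big_set1 xopt1 xopt_max xbark1.
split=> [||||k]; rewrite ?xopt1 //.
- by apply/set0Pn; exists ord_max; rewrite set11.
- by move=> k /set1P ->.
- by split=> // k /set1P ->; rewrite xopt_max.
- by move=> /set1P ->; rewrite cards1 xopt_max.
Qed.
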